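(* Let $p(bc\mid yz)$ be a bipartite conditional probability distribution with binary settings $y,z\in\{0,1\}$ and binary outcomes $b,c\in\{0,1\}$ which is nonsignalling, i.e. $\sum_c p(bc\mid yz)$ does not depend on $z$ and $\sum_b p(bc\mid yz)$ does not depend on $y$. Then $$\frac14\sum_{y,z\in\{0,1\}} p(b\oplus c = yz\mid yz) \;\leq\; \frac54 - \frac12\, p(b=0\mid y=0),$$ where $p(b=0\mid y=0)=\sum_c p(b=0,c\mid y=0,z)$ (independent of $z$ by nonsignalling).
   Context: $\oplus$ denotes addition modulo 2, and $p(b\oplus c = yz\mid yz)=\sum_{b,c:\, b\oplus c = yz} p(bc\mid yz)$. *)

(* A bipartite conditional distribution with binary settings
   and outcomes is a function p b c y z (outcomes b c, settings y z), 0 = false. *)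
From mathcomp Require Import all_boot all_order all_algebra.
Set Implicit Arguments. Unset Strict Implicit. Unset Printing Implicit Defensive.
Import Order.TTheory GRing.Theory Num.Theory.
Local Open Scope ring_scope.

Definition cond_prob (R : realFieldType) (p : bool -> bool -> bool -> bool -> R) : Prop :=
  (forall b c y z, 0 <= p b c y z) /\
  (forall y z, \sum_(b : bool) \sum_(c : bool) p b c y z = 1).

Definition nonsignalling (R : realFieldType) (p : bool -> bool -> bool -> bool -> R) : Prop :=
  (forall b y z z', \sum_(c : bool) p b c y z = \sum_(c : bool) p b c y z') /\
  (forall c z y y', \sum_(b : bool) p b c y z = \sum_(b : bool) p b c y' z).

Definition p_win (R : realFieldType) (p : bool -> bool -> bool -> bool -> R) (y z : bool) : R :=
  \sum_(b : bool) \sum_(c : bool | addb b c == (y && z)) p b c y z.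

(* p(b = 0 | y = 0), computed at z = 0 (independent of z by nonsignalling) *)
Definition pA0 (R : realFieldType) (p : bool -> bool -> bool -> bool -> R) : R :=
  \sum_(c : bool) p false c false false.

(** For a joint distribution q of two bits b, c and any t,
    P(b = 0) - P(c = t) = q(0, ~t) - q(1, t), and both atoms lie outside the
    event b (+) c = t; hence P(b (+) c = t) <= 1 - |P(b = 0) - P(c = t)|.
    By nonsignalling the four settings share the marginals b0(y) = P(b = 0 | y)
    and c0(z) = P(c = 0 | z), and the four distances in these bounds dominate
    the telescoping sum
    (b0(0) - c0(0)) + (c0(0) - b0(1)) + (b0(1) - (1 - c0(1))) + (b0(0) - c0(1))
    = 2 b0(0) - 1,
    so the four winning probabilities add up to at most 5 - 2 b0(0). *)
From mathcomp Require Import all_boot all_order all_algebra.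
From mathcomp Require Import lra.
Set Implicit Arguments. Unset Strict Implicit. Unset Printing Implicit Defensive.
Import Order.TTheory GRing.Theory Num.Theory.
Local Open Scope ring_scope.

Definition fst_marginal (R : realFieldType) (q : bool -> bool -> R) (b : bool) : R :=
  \sum_(c : bool) q b c.

Definition snd_marginal (R : realFieldType) (q : bool -> bool -> R) (c : bool) : R :=
  \sum_(b : bool) q b c.

Section BitPair.

Variables (R : realFieldType) (q : bool -> bool -> R).
Hypothesis q_ge0 : forall b c, 0 <= q b c.
Hypothesis q_sum1 : \sum_(b : bool) \sum_(c : bool) q b c = 1.

Lemma snd_marginal_sum1 : snd_marginal q false + snd_marginal q true = 1.
Proof. by rewrite -q_sum1 exchange_big big_bool addrC. Qed.

Lemma parity_prob_add_dist_le (t : bool) :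
  \sum_(b : bool) \sum_(c : bool | addb b c == t) q b c
    + `|fst_marginal q false - snd_marginal q t| <= 1.
Proof.
rewrite addrC -lerBrDr ler_norml /fst_marginal /snd_marginal.
rewrite big_bool !(big_mkcond (fun c => _ == t)) /=.
move: q_sum1; rewrite !big_bool /=.
have := q_ge0 false false; have := q_ge0 false true.
have := q_ge0 true false; have := q_ge0 true true.
by case: t => /= *; apply/andP; split; lra.
Qed.

End BitPair.

Theorem lemma1 (R : realFieldType) (p : bool -> bool -> bool -> bool -> R) :
  cond_prob p -> nonsignalling p ->
  4^-1 * (\sum_(y : bool) \sum_(z : bool) p_win p y z) <= 5 / 4 - 2^-1 * pA0 p.
Proof.
move=> [p_ge0 p_sum1] [ns_fst ns_snd].
pose pb0 y z := fst_marginal (fun b c => p b c y z) false.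
pose pc y z t := snd_marginal (fun b c => p b c y z) t.
have win_le y z : p_win p y z + `|pb0 y z - pc y z (y && z)| <= 1.
  exact: parity_prob_add_dist_le (fun b c => p_ge0 b c y z) (p_sum1 y z) (y && z).
have pb0_00 : pb0 false false = pA0 p by [].
have pb0_01 : pb0 false true = pb0 false false := ns_fst false false true false.
have pb0_11 : pb0 true true = pb0 true false := ns_fst false true true false.
have pc0_10 : pc true false false = pc false false false := ns_snd false false true false.
have pc0_01 : pc false true false = pc true true false := ns_snd false true false true.
have pc_11 : pc true true false + pc true true true = 1 := snd_marginal_sum1 (p_sum1 true true).
have := ler_norm (pb0 false false - pc false false false).
have := ler_norm (pc true false false - pb0 true false); rewrite distrC.
have := ler_norm (pb0 true true - pc true true true).
have := ler_norm (pb0 false true - pc false true false).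
have := win_le false false; have := win_le false true.
have := win_le true false; have := win_le true true.
rewrite !big_bool /=.
lra.
Qed.
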